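(* Let $A\in\mathbb{R}^{m\times n}$, $y\in\mathbb{R}^m$, $\lambda>0$, and let $x^\star$ be a global minimizer of $$\min_{x\in\mathbb{R}^n}\ \frac{1}{2\lambda}\|Ax-y\|^2+\sum_{i=1}^{N} w_i\|x_{G_i}\|.$$ Let $\beta^\star=-\frac{1}{\lambda}A^\top(Ax^\star-y)$. Then for every $t\in\{1,\dots,N\}$: if $\|\beta^\star_{G_t}\|<w_t$, then $x^\star_{G_t}=0$.
   Context: Let $n,N\in\mathbb{N}$ and let $G_1,\dots,G_N\subseteq\{1,\dots,n\}$ be nonempty index sets (groups), possibly overlapping, with $\bigcup_{i=1}^N G_i=\{1,\dots,n\}$, and let $w_1,\dots,w_N>0$ be weights. For $x\in\mathbb{R}^n$ and $G\subseteq\{1,\dots,n\}$, $x_G\in\mathbb{R}^{|G|}$ denotes the subvector of $x$ with entries indexed by $G$ (in increasing index order). All norms are Euclidean. The vector $\beta^\star$ is called the LASSO certificate. *)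

From HB Require Import structures.
From mathcomp Require Import all_boot all_order all_algebra.
From mathcomp Require Import reals.
Set Implicit Arguments. Unset Strict Implicit. Unset Printing Implicit Defensive.
Import Order.TTheory GRing.Theory Num.Theory.
Local Open Scope ring_scope.

Definition eucl_norm (R : realType) (k : nat) (v : 'cV[R]_k) : R :=
  Num.sqrt (\sum_(i < k) v i 0 ^+ 2).

Definition group_norm (R : realType) (k : nat) (v : 'cV[R]_k) (G : {set 'I_k}) : R :=
  Num.sqrt (\sum_(i in G) v i 0 ^+ 2).

Definition glasso_obj (R : realType) (m n N : nat) (A : 'M[R]_(m, n)) (y : 'cV[R]_m)
  (lam : R) (G : 'I_N -> {set 'I_n}) (w : 'I_N -> R) (x : 'cV[R]_n) : R :=
  (2 * lam)^-1 * eucl_norm (A *m x - y) ^+ 2 + \sum_(i < N) w i * group_norm x (G i).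

(* Shrink the block x_{G_t} of a minimiser x by a factor 1 - s, 0 < s <= 1.
   The data-fit term changes by s <x_{G_t}, beta_{G_t}> + O(s^2), the penalty
   of group t drops by s w_t ||x_{G_t}||, and the penalties of the other
   (possibly overlapping) groups cannot grow.  Minimality thus forces
   w_t ||x_{G_t}|| <= <x_{G_t}, beta_{G_t}> <= ||x_{G_t}|| ||beta_{G_t}||
   (Cauchy-Schwarz), which contradicts ||beta_{G_t}|| < w_t unless x_{G_t} = 0. *)

From HB Require Import structures.
From mathcomp Require Import all_boot all_order all_algebra.
From mathcomp Require Import reals ring lra.
Set Implicit Arguments. Unset Strict Implicit. Unset Printing Implicit Defensive.
Import Order.TTheory GRing.Theory Num.Theory.
Local Open Scope ring_scope.

Lemma sqrt_sum_sqr_eq0 (R : rcfType) (I : finType) (P : pred I) (u : I -> R) :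
  Num.sqrt (\sum_(i | P i) u i ^+ 2) = 0 -> forall i, P i -> u i = 0.
Proof.
move=> /eqP; rewrite sqrtr_eq0 => le0 i Pi; apply/eqP; rewrite -sqrf_eq0; apply/eqP.
have sum0 : \sum_(i | P i) u i ^+ 2 = 0.
  by apply/eqP; rewrite eq_le le0 sumr_ge0 // => j _; apply: sqr_ge0.
exact: (psumr_eq0P (fun j _ => sqr_ge0 (u j)) sum0).
Qed.

Lemma cauchy_schwarz_sum (R : rcfType) (I : finType) (P : pred I) (u v : I -> R) :
  \sum_(i | P i) u i * v i <=
  Num.sqrt (\sum_(i | P i) u i ^+ 2) * Num.sqrt (\sum_(i | P i) v i ^+ 2).
Proof.
set a := Num.sqrt _; set b := Num.sqrt _; set p := \sum_(i | P i) _.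
have [ab0 | ab_gt0] := eqVneq (a * b) 0.
  have p0 : p = 0.
    apply: big1 => i Pi; move: ab0 => /eqP; rewrite mulf_eq0.
    by case/orP=> /eqP/sqrt_sum_sqr_eq0-> //; rewrite ?mul0r ?mulr0.
  by rewrite p0 ab0.
have a2 : a ^+ 2 = \sum_(i | P i) u i ^+ 2 by rewrite sqr_sqrtr ?sumr_ge0 // => i; rewrite sqr_ge0.
have b2 : b ^+ 2 = \sum_(i | P i) v i ^+ 2 by rewrite sqr_sqrtr ?sumr_ge0 // => i; rewrite sqr_ge0.
have expand : \sum_(i | P i) (b * u i - a * v i) ^+ 2 = 2 * (a * b) * (a * b - p).
  rewrite (eq_bigr (fun i => b ^+ 2 * u i ^+ 2 - 2 * (a * b) * (u i * v i)
                             + a ^+ 2 * v i ^+ 2)); last by move=> i _; ring.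
  by rewrite !big_split /= sumrN -!mulr_sumr -a2 -b2 -/p; ring.
have ab_ge0 : 0 <= a * b by rewrite mulr_ge0 ?sqrtr_ge0.
have : 0 <= 2 * (a * b) * (a * b - p).
  by rewrite -expand sumr_ge0 // => i _; rewrite sqr_ge0.
by rewrite pmulr_rge0 ?subr_ge0 // mulr_gt0 // lt_def ab_gt0.
Qed.

Lemma ge0_of_linear_perturbation (R : realFieldType) (c K : R) :
  (forall s, 0 < s <= 1 -> 0 <= c + s * K) -> 0 <= c.
Proof.
move=> hs; rewrite leNgt; apply/negP => c_lt0.
have den_gt0 : 0 < - c + `|K| by rewrite ltr_wpDr // oppr_gt0.
set s := - c / (- c + `|K|).
have s_gt0 : 0 < s by rewrite divr_gt0 // oppr_gt0.
have s_le1 : s <= 1 by rewrite ler_pdivrMr // mul1r lerDl.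
have sK_lt : s * `|K| < - c.
  by rewrite /s mulrAC ltr_pdivrMr // ltr_pM2l ?oppr_gt0 // ltrDr oppr_gt0.
have sK_le : s * K <= s * `|K| by rewrite ler_pM2l // ler_norm.
have := hs s; rewrite s_gt0 s_le1 => /(_ isT).
lra.
Qed.

Lemma mulmx_trC (R : comPzSemiRingType) k (u v : 'cV[R]_k) : u^T *m v = v^T *m u.
Proof.
apply/matrixP => i j; rewrite !ord1 !mxE.
by apply: eq_bigr => l _; rewrite !mxE mulrC.
Qed.

Definition restrict_cV (R : pzSemiRingType) k (S : {set 'I_k}) (x : 'cV[R]_k) : 'cV[R]_k :=
  \col_j (if j \in S then x j 0 else 0).

Lemma restrict_cV_mulmx (R : pzSemiRingType) k (S : {set 'I_k}) (x v : 'cV[R]_k) :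
  ((restrict_cV S x)^T *m v) 0 0 = \sum_(j in S) x j 0 * v j 0.
Proof.
rewrite mxE [RHS]big_mkcond; apply: eq_bigr => j _; rewrite !mxE.
by case: ifP => _ //; rewrite mul0r.
Qed.

Section EuclideanNorm.
Variable R : realType.

Lemma sqr_eucl_norm k (v : 'cV[R]_k) : eucl_norm v ^+ 2 = (v^T *m v) 0 0.
Proof.
rewrite /eucl_norm sqr_sqrtr; last by apply: sumr_ge0 => i _; apply: sqr_ge0.
by rewrite mxE; apply: eq_bigr => i _; rewrite mxE expr2.
Qed.

Lemma sqr_eucl_normB k (u v : 'cV[R]_k) (s : R) :
  eucl_norm (u - s *: v) ^+ 2 =
  eucl_norm u ^+ 2 - 2 * s * (v^T *m u) 0 0 + s ^+ 2 * eucl_norm v ^+ 2.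
Proof.
rewrite !sqr_eucl_norm [(u - _)^T]linearB /= [(s *: v)^T]linearZ /= mulmxBl !mulmxBr.
rewrite -!scalemxAl -!scalemxAr (mulmx_trC u v) !mxE; ring.
Qed.

Variable k : nat.
Implicit Types (x : 'cV[R]_k) (S T : {set 'I_k}).

Lemma group_norm_shrink_le S T x (s : R) : 0 <= s <= 1 ->
  group_norm (x - s *: restrict_cV S x) T <= group_norm x T.
Proof.
move=> /andP[s_ge0 s_le1]; rewrite /group_norm ler_sqrt; last first.
  by apply: sumr_ge0 => j _; apply: sqr_ge0.
apply: ler_sum => j _; rewrite !mxE; case: ifP => _; last by rewrite mulr0 subr0.
move: (x j 0) => a; nra.
Qed.

Lemma group_norm_shrink S x (s : R) : s <= 1 ->
  group_norm (x - s *: restrict_cV S x) S = (1 - s) * group_norm x S.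
Proof.
move=> s_le1; have s_ge0 : 0 <= 1 - s by rewrite subr_ge0.
rewrite /group_norm -(ger0_norm s_ge0) -sqrtr_sqr -sqrtrM ?sqr_ge0 // mulr_sumr.
by congr Num.sqrt; apply: eq_bigr => j jS; rewrite !mxE jS; ring.
Qed.

End EuclideanNorm.

Section GroupLasso.
Variables (R : realType) (m n N : nat) (A : 'M[R]_(m, n)) (y : 'cV[R]_m) (lam : R).
Variables (G : 'I_N -> {set 'I_n}) (w : 'I_N -> R).
Hypothesis lam_gt0 : 0 < lam.
Hypothesis w_ge0 : forall i, 0 <= w i.

Definition lasso_certificate (x : 'cV[R]_n) : 'cV[R]_n :=
  - (lam^-1 *: (A^T *m (A *m x - y))).

Local Notation obj := (glasso_obj A y lam G w).

Lemma glasso_obj_shrink_group x t (s : R) : 0 <= s <= 1 ->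
  obj (x - s *: restrict_cV (G t) x) <=
  obj x - s * (w t * group_norm x (G t)
               - \sum_(j in G t) x j 0 * lasso_certificate x j 0)
  + s ^+ 2 * ((2 * lam)^-1 * eucl_norm (A *m restrict_cV (G t) x) ^+ 2).
Proof.
move=> s01; set D := restrict_cV (G t) x.
have certE : A^T *m (A *m x - y) = - lam *: lasso_certificate x.
  by rewrite scaleNr scalerN opprK scalerA mulfV ?gt_eqF // scale1r.
have fitE : eucl_norm (A *m (x - s *: D) - y) ^+ 2 =
    eucl_norm (A *m x - y) ^+ 2
    + 2 * lam * s * \sum_(j in G t) x j 0 * lasso_certificate x j 0
    + s ^+ 2 * eucl_norm (A *m D) ^+ 2.
  rewrite mulmxBr -scalemxAr addrAC sqr_eucl_normB trmx_mul -mulmxA certE.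
  by rewrite -scalemxAr mxE restrict_cV_mulmx; ring.
have penalty : \sum_i w i * group_norm (x - s *: D) (G i) <=
    \sum_i w i * group_norm x (G i) - s * (w t * group_norm x (G t)).
  rewrite (bigD1 t) // [X in _ <= X - _](bigD1 t) //= group_norm_shrink; last first.
    by case/andP: s01.
  have others : \sum_(i | i != t) w i * group_norm (x - s *: D) (G i) <=
                \sum_(i | i != t) w i * group_norm x (G i).
    by apply: ler_sum => i _; rewrite ler_wpM2l ?group_norm_shrink_le.
  lra.
rewrite /glasso_obj fitE.
set p := \sum_(j in G t) _; set Q := eucl_norm (A *m D) ^+ 2.
have -> : (2 * lam)^-1 * (eucl_norm (A *m x - y) ^+ 2 + 2 * lam * s * p + s ^+ 2 * Q) =
          (2 * lam)^-1 * eucl_norm (A *m x - y) ^+ 2 + s * p + s ^+ 2 * ((2 * lam)^-1 * Q).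
  by field; rewrite gt_eqF.
lra.
Qed.

Variable xs : 'cV[R]_n.
Hypothesis xs_min : forall x, obj xs <= obj x.

Lemma glasso_min_group_ineq t :
  w t * group_norm xs (G t) <= \sum_(j in G t) xs j 0 * lasso_certificate xs j 0.
Proof.
set K := (2 * lam)^-1 * eucl_norm (A *m restrict_cV (G t) xs) ^+ 2.
rewrite -subr_ge0; apply: (ge0_of_linear_perturbation (K := K)) => s /andP[s_gt0 s_le1].
have := @glasso_obj_shrink_group xs t s; rewrite (ltW s_gt0) s_le1.
move=> /(_ isT) /(le_trans (xs_min _)); rewrite -addrA lerDl -/K.
set p := \sum_(j in G t) _ => descent; rewrite -(pmulr_rge0 _ s_gt0).
suff -> : s * (p - w t * group_norm xs (G t) + s * K) =
          - (s * (w t * group_norm xs (G t) - p)) + s ^+ 2 * K by [].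
ring.
Qed.

Lemma glasso_min_group_norm_eq0 t :
  group_norm (lasso_certificate xs) (G t) < w t -> group_norm xs (G t) = 0.
Proof.
move=> cert_lt; apply/eqP; rewrite eq_le sqrtr_ge0 andbT leNgt; apply/negP => norm_gt0.
have := le_trans (glasso_min_group_ineq t)
  (cauchy_schwarz_sum (fun j => j \in G t) (fun j => xs j 0)
                      (fun j => lasso_certificate xs j 0)).
by rewrite mulrC ler_pM2l // leNgt cert_lt.
Qed.

End GroupLasso.

Theorem proposition3p5 (R : realType) (m n N : nat)
  (G : 'I_N -> {set 'I_n}) (w : 'I_N -> R)
  (hGne : forall i, G i != set0)
  (hGcov : \bigcup_(i < N) G i = [set: 'I_n])
  (hw : forall i, 0 < w i)
  (A : 'M[R]_(m, n)) (y : 'cV[R]_m) (lam : R) (hlam : 0 < lam)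
  (xs : 'cV[R]_n)
  (hmin : forall x : 'cV[R]_n, glasso_obj A y lam G w xs <= glasso_obj A y lam G w x) :
  let beta := - (lam^-1 *: (A^T *m (A *m xs - y))) in
  forall t : 'I_N, group_norm beta (G t) < w t ->
    forall j, j \in G t -> xs j 0 = 0.
Proof.
move=> beta t cert_lt.
have norm0 := glasso_min_group_norm_eq0 hlam (fun i => ltW (hw i)) hmin cert_lt.
exact: sqrt_sum_sqr_eq0 norm0.
Qed.
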